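(* Consider the version of the jelly–labour model with money described in the context, in which the total amount of money $M=m^{(H)}_t+m^{(F)}_t$ is constant over time. Then the viability closure is constant over time, and for every $t$ the viable region at time $t$ is a subset of the viability closure.
   Context: Model (version with money as a pure store of value). There are an aggregate household and an aggregate firm, and two goods: labour (the numéraire, wage $w=1$; one unit of money always has the value of one unit of labour) and a consumption good called jelly. Parameters: $\alpha,\beta>0$, $0<\gamma<1$, labour force $L_f>0$. The firm has production function $J=L^\gamma$ and expected demand function $\phi_t(J)=z_t/J^{\zeta_t}$ (parameters updated every period). At time $t$ the household holds money $m^{(H)}_t\ge0$ and the firm holds money $m^{(F)}_t\ge0$. One period $t\to t+1$ proceeds as follows. (1) The firm chooses $L^{(D)}_{t+1}=\arg\min_L|L^\gamma\phi_t(L^\gamma)-L|$ subject to $0\le L\le L_f$ and the budget limitation $L\le m^{(F)}_t$. It sets the price $p_{t+1}=\phi_t((L^{(D)}_{t+1})^\gamma)$. (2) The household supplies $L^{(S)}_{t+1}=\frac{\beta}{\alpha+\beta}L_f$. (3) Transacted labour is $L^{(M)}_{t+1}=\min\{L^{(D)}_{t+1},L^{(S)}_{t+1}\}$. (4) The jelly supply is $J^{(S)}_{t+1}=(L^{(M)}_{t+1})^\gamma$. (5) The household demands $J^{(D)}_{t+1}=\min\{\frac{\beta}{\alpha+\beta}\frac{L_f}{p_{t+1}},\frac{m^{(H)}_t}{p_{t+1}}\}$, i.e. it faces the budget limitation given by its money holdings. (6) Transacted jelly is $J^{(M)}_{t+1}=\min\{J^{(D)}_{t+1},J^{(S)}_{t+1}\}$.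 (7) The money holdings update as $m^{(F)}_{t+1}=m^{(F)}_t+p_{t+1}J^{(M)}_{t+1}-L^{(M)}_{t+1}$ and $m^{(H)}_{t+1}=m^{(H)}_t-p_{t+1}J^{(M)}_{t+1}+L^{(M)}_{t+1}$. (8) The firm updates its expectations. The agents' budgets are their money holdings: $B^{(F)}_t=m^{(F)}_t$ and $B^{(H)}_t=m^{(H)}_t$. The economic state at time $t$ is $e_t=(L^{(D)}_t,L^{(S)}_t,J^{(D)}_t,J^{(S)}_t,p_t)$. The viable region at time $t$ is the set of economic states that could be reached at time $t+1$ without violating the agents' budget limitations. The viability closure is the set of economic states that would be viable if both agents had the full amount $M$ at their disposal when making their decisions about supply, demand and prices. *)

From HB Require Import structures.
From mathcomp Require Import all_boot all_order all_algebra.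
From mathcomp Require Import all_classical all_reals all_analysis.
Set Implicit Arguments. Unset Strict Implicit. Unset Printing Implicit Defensive.
Import Order.TTheory GRing.Theory Num.Theory.
Local Open Scope ring_scope.
Local Open Scope classical_set_scope.

Record econ_state (R : realType) := EconState {
  LD : R; LS : R; JD : R; JS : R; price : R }.

Definition phi (R : realType) (z zeta J : R) : R := z / (J `^ zeta).

Definition supply (R : realType) (alpha beta Lf : R) : R := beta / (alpha + beta) * Lf.

Definition firm_choice (R : realType) (gamma Lf z zeta mF L : R) : Prop :=
  [/\ 0 <= L <= Lf, L <= mF &
      forall L', 0 <= L' <= Lf -> L' <= mF ->
        `| L `^ gamma * phi z zeta (L `^ gamma) - L |
          <= `| L' `^ gamma * phi z zeta (L' `^ gamma) - L' | ].

(* One period t -> t+1, steps (1)-(7): from money holdings (mF, mH) and expectation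
   parameters (z, zeta) at time t to the state e' and holdings (mF', mH') at t+1. *)
Definition period (R : realType) (alpha beta gamma Lf z zeta mF mH : R)
    (e' : econ_state R) (mF' mH' : R) : Prop :=
  let LM := Num.min (LD e') (LS e') in
  let JM := Num.min (JD e') (JS e') in
  firm_choice gamma Lf z zeta mF (LD e') /\
  price e' = phi z zeta ((LD e') `^ gamma) /\
  LS e' = supply alpha beta Lf /\
  JS e' = LM `^ gamma /\
  JD e' = Num.min (supply alpha beta Lf / price e') (mH / price e') /\
  mF' = mF + price e' * JM - LM /\
  mH' = mH - price e' * JM + LM.

(* A trajectory of the model: expectation parameters z, zeta are updated by an
   arbitrary rule (step (8)), all periods follow steps (1)-(7). *)
Definition trajectory (R : realType) (alpha beta gamma Lf : R) (z zeta : nat -> R)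
    (mF mH : nat -> R) (e : nat -> econ_state R) : Prop :=
  forall t : nat, period alpha beta gamma Lf (z t) (zeta t) (mF t) (mH t)
                    (e t.+1) (mF t.+1) (mH t.+1).

(* Economic states reachable (structurally) in one period when the firm has budget BF
   and the household budget BH, and respecting these budget limitations:
   labour demand L^(D) <= B^(F), jelly expenditure p J^(D) <= B^(H). *)
Definition viable_set (R : realType) (alpha beta gamma Lf BF BH : R) : set (econ_state R) :=
  [set e | (0 <= LD e <= Lf) /\
            LS e = supply alpha beta Lf /\
            JS e = (Num.min (LD e) (LS e)) `^ gamma /\
            0 <= price e /\ 0 <= JD e /\
            price e * JD e <= supply alpha beta Lf /\
            (LD e <= BF /\ price e * JD e <= BH)].

Definition viable_region (R : realType) (alpha beta gamma Lf : R) (mF mH : nat -> R)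
    (t : nat) : set (econ_state R) :=
  viable_set alpha beta gamma Lf (mF t) (mH t).

Definition viability_closure (R : realType) (alpha beta gamma Lf : R) (mF mH : nat -> R)
    (t : nat) : set (econ_state R) :=
  viable_set alpha beta gamma Lf (mF t + mH t) (mF t + mH t).

From HB Require Import structures.
From mathcomp Require Import all_boot all_order all_algebra.
From mathcomp Require Import all_classical all_reals all_analysis.
From mathcomp Require Import ring lra.
Set Implicit Arguments. Unset Strict Implicit.
Import Order.TTheory GRing.Theory Num.Theory.
Local Open Scope ring_scope.
Local Open Scope classical_set_scope.

(* Each period only moves money between the two agents, so M_t is constant and the
   viability closure, which depends on the budgets only through M_t, is constant.
   The budget limitations of steps (1) and (5) keep both holdings nonnegative, so
   each holding is at most M_t; since enlarging the budgets enlarges the viable set,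
   the viable region lies in the closure. *)

Lemma mulr_le_of_le_div (R : realFieldType) (p b x : R) :
  0 <= p -> 0 <= b -> x <= b / p -> p * x <= b.
Proof.
rewrite le_eqVlt => /orP[/eqP <- b0 _|p0 _ xb]; first by rewrite mul0r.
by rewrite mulrC -ler_pdivlMr.
Qed.

Lemma phi_ge0 (R : realType) (z zeta J : R) : 0 <= z -> 0 <= phi z zeta J.
Proof. by move=> z0; rewrite /phi divr_ge0 // powR_ge0. Qed.

Lemma supply_ge0 (R : realType) (alpha beta Lf : R) :
  0 <= alpha -> 0 <= beta -> 0 <= Lf -> 0 <= supply alpha beta Lf.
Proof. by move=> a0 b0 L0; rewrite /supply !mulr_ge0 // invr_ge0 addr_ge0. Qed.

Lemma viable_set_subset (R : realType) (alpha beta gamma Lf BF BH BF' BH' : R) :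
  BF <= BF' -> BH <= BH' ->
  viable_set alpha beta gamma Lf BF BH `<=` viable_set alpha beta gamma Lf BF' BH'.
Proof.
move=> hF hH e [LD0 [LS0 [JS0 [p0 [JD0 [pJS [LDF pJH]]]]]]].
by do 6 split=> //; split; [exact: le_trans hF|exact: le_trans hH].
Qed.

Section Period.
Variables (R : realType) (alpha beta gamma Lf z zeta mF mH : R).
Variables (e' : econ_state R) (mF' mH' : R).
Hypothesis hperiod : period alpha beta gamma Lf z zeta mF mH e' mF' mH'.

Lemma period_money_conserved : mF' + mH' = mF + mH.
Proof. by case: hperiod => _ [_ [_ [_ [_ [-> ->]]]]]; ring. Qed.

Lemma period_money_ge0 :
  0 <= alpha -> 0 <= beta -> 0 <= Lf -> 0 <= z -> 0 <= mF -> 0 <= mH ->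
  0 <= mF' /\ 0 <= mH'.
Proof.
move=> a0 b0 Lf0 z0 mF0 mH0.
case: hperiod => [[/andP[LD0 _] LDF _] [hp [hLS [hJS [hJD [-> ->]]]]]].
have S0 := supply_ge0 a0 b0 Lf0.
have p0 : 0 <= price e' by rewrite hp phi_ge0.
set LM := Num.min (LD e') (LS e'); set JM := Num.min (JD e') (JS e').
have LM0 : 0 <= LM by rewrite le_min LD0 hLS S0.
have LMF : LM <= mF by rewrite ge_min LDF.
have JM0 : 0 <= JM by rewrite le_min hJD hJS powR_ge0 le_min !divr_ge0.
have pJM0 : 0 <= price e' * JM by rewrite mulr_ge0.
have pJMH : price e' * JM <= mH.
  by apply: mulr_le_of_le_div => //; rewrite ge_min hJD !ge_min lexx !orbT.
by split; lra.
Qed.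

End Period.

Section Trajectory.
Variables (R : realType) (alpha beta gamma Lf : R) (z zeta mF mH : nat -> R).
Variable e : nat -> econ_state R.
Hypothesis htraj : trajectory alpha beta gamma Lf z zeta mF mH e.

Lemma trajectory_money_conserved t : mF t + mH t = mF 0%N + mH 0%N.
Proof. by elim: t => [//|t IH]; rewrite (period_money_conserved (htraj t)). Qed.

Lemma trajectory_money_ge0 :
  0 <= alpha -> 0 <= beta -> 0 <= Lf -> (forall t, 0 <= z t) ->
  0 <= mF 0%N -> 0 <= mH 0%N -> forall t, 0 <= mF t /\ 0 <= mH t.
Proof.
move=> a0 b0 Lf0 z0 mF0 mH0; elim=> [//|t [mFt mHt]].
exact: period_money_ge0 (htraj t) a0 b0 Lf0 (z0 t) mFt mHt.
Qed.

End Trajectory.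

Theorem proposition4 (R : realType) (alpha beta gamma Lf : R)
  (halpha : 0 < alpha) (hbeta : 0 < beta) (hgamma0 : 0 < gamma) (hgamma1 : gamma < 1)
  (hLf : 0 < Lf)
  (z zeta : nat -> R) (hz : forall t, 0 < z t)
  (mF mH : nat -> R) (e : nat -> econ_state R)
  (hmF0 : 0 <= mF 0%N) (hmH0 : 0 <= mH 0%N)
  (htraj : trajectory alpha beta gamma Lf z zeta mF mH e) :
  (forall t : nat, viability_closure alpha beta gamma Lf mF mH t
                   = viability_closure alpha beta gamma Lf mF mH 0%N) /\
  (forall t : nat, viable_region alpha beta gamma Lf mF mH t
                   `<=` viability_closure alpha beta gamma Lf mF mH t).
Proof.
split=> t; first by rewrite /viability_closure (trajectory_money_conserved htraj).
have [mFt mHt] : 0 <= mF t /\ 0 <= mH t.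
  apply: (trajectory_money_ge0 htraj (ltW halpha) (ltW hbeta) (ltW hLf) _ hmF0 hmH0).
  by move=> s; exact: ltW.
rewrite /viable_region /viability_closure.
by apply: viable_set_subset; [rewrite lerDl | rewrite lerDr].
Qed.
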